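(* Let $n\ge1$, let $a_0^{(n)},a_1^{(n)},\dots,a_{n-1}^{(n)}$ be positive real numbers, and let $H$ be a nonzero real inner product space with inner product $(\cdot,\cdot)$ and norm $\|\cdot\|$. For $u^0,\dots,u^n\in H$ write $\nabla_\tau u^k=u^k-u^{k-1}$. Then the inequality $$\frac12\sum_{k=1}^n a_{n-k}^{(n)}\big(\|u^k\|^2-\|u^{k-1}\|^2\big)\le\Big(\sum_{k=1}^n a_{n-k}^{(n)}\nabla_\tau u^k,\;u^n\Big)$$ holds for all $u^0,\dots,u^n\in H$ if and only if $a_{n-k}^{(n)}$ is monotonically increasing with respect to $k$, i.e. $a_{n-1}^{(n)}\le a_{n-2}^{(n)}\le\dots\le a_0^{(n)}$.
   Context: In the paper the $a_{n-k}^{(n)}$ are discrete convolution kernels of a discrete Caputo operator $\mathrm{D}_\tau^\alpha u^n=\sum_{k=1}^n a_{n-k}^{(n)}\nabla_\tau u^k$, so the inequality reads $\frac12\mathrm{D}_\tau^\alpha\|u^n\|^2\le(\mathrm{D}_\tau^\alpha u^n,u^n)$. *)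

From mathcomp Require Import all_boot all_order all_algebra.
From mathcomp Require Import reals.
Set Implicit Arguments. Unset Strict Implicit. Unset Printing Implicit Defensive.
Import Order.TTheory GRing.Theory Num.Theory.
Local Open Scope ring_scope.

Record inner_product (R : realType) (V : lmodType R) := InnerProduct {
  ip :> V -> V -> R;
  ip_sym : forall u v, ip u v = ip v u;
  ip_linearl : forall (a : R) u v w, ip (a *: u + v) w = a * ip u w + ip v w;
  ip_ge0 : forall u, 0 <= ip u u;
  ip_eq0 : forall u, ip u u = 0 -> u = 0
}.

Definition ipnorm2 (R : realType) (V : lmodType R) (ipr : inner_product V) (u : V) : R :=
  ipr u u.

Definition nabla (R : realType) (V : lmodType R) (u : nat -> V) (k : nat) : V :=
  u k - u k.-1.

From mathcomp Require Import all_boot all_order all_algebra.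
From mathcomp Require Import reals.
From mathcomp Require Import ring zify.
Import Order.TTheory GRing.Theory Num.Theory.
Local Open Scope ring_scope.

(* Polarization turns each term of [(D u^n, u^n) - 1/2 D ||u^n||^2] into
   [1/2 a_{n-k} (||u^{k-1} - u^n||^2 - ||u^k - u^n||^2)], and summation by
   parts rewrites the whole defect as
   [1/2 (a_{n-1} ||u^0 - u^n||^2 + sum_{k=1}^{n-1} (a_{n-k-1} - a_{n-k}) ||u^k - u^n||^2)].
   This is nonnegative when the kernels are monotone; conversely, taking
   [u^k = v] for a single index [k] and [u = 0] elsewhere isolates the
   coefficient [a_{n-k-1} - a_{n-k}]. *)

Definition caputo {R : realType} {V : lmodType R} (a : nat -> R) (u : nat -> V)
    (n : nat) : V :=
  \sum_(1 <= k < n.+1) a (n - k)%N *: nabla u k.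

Lemma sumr_by_parts {R : comPzRingType} (b d : nat -> R) (N : nat) : (1 <= N)%N ->
  \sum_(1 <= k < N.+1) b k * (d k.-1 - d k) =
  b 1%N * d 0%N + \sum_(1 <= k < N) (b k.+1 - b k) * d k - b N * d N.
Proof.
elim: N => // -[_ _ | N IHN _].
  by rewrite big_nat1 big_geq // addr0 mulrBr.
by rewrite big_nat_recr //= IHN // [in RHS]big_nat_recr //=; ring.
Qed.

Section InnerProduct.
Context {R : realType} {V : lmodType R} (ipr : inner_product V).

Lemma ipDl u v w : ipr (u + v) w = ipr u w + ipr v w.
Proof. by rewrite -[u in LHS]scale1r ip_linearl mul1r. Qed.

Lemma ip0l w : ipr 0 w = 0.
Proof. by apply: (@addrI _ (ipr 0 w)); rewrite -ipDl !addr0. Qed.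

Lemma ipZl c u w : ipr (c *: u) w = c * ipr u w.
Proof. by rewrite -[c *: u]addr0 ip_linearl ip0l addr0. Qed.

Lemma ipBl u v w : ipr (u - v) w = ipr u w - ipr v w.
Proof. by rewrite ipDl -scaleN1r ipZl mulN1r. Qed.

Lemma ipBr u v w : ipr w (u - v) = ipr w u - ipr w v.
Proof. by rewrite ip_sym ipBl !(ip_sym ipr w). Qed.

Lemma ip_suml (I : Type) (r : seq I) (F : I -> V) w :
  ipr (\sum_(i <- r) F i) w = \sum_(i <- r) ipr (F i) w.
Proof. exact: (big_morph (ipr^~ w) (fun u v => ipDl u v w) (ip0l w)). Qed.

Lemma ipnorm2B u v :
  ipnorm2 ipr (u - v) = ipnorm2 ipr u - 2 * ipr u v + ipnorm2 ipr v.
Proof. by rewrite /ipnorm2 !ipBl !ipBr (ip_sym ipr v u); ring. Qed.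

Lemma ipnorm2_0 : ipnorm2 ipr 0 = 0.
Proof. exact: ip0l. Qed.

Lemma ipnorm2_gt0 v : v != 0 -> 0 < ipnorm2 ipr v.
Proof.
move=> v_neq0; rewrite lt_def ip_ge0 andbT.
by apply: contra v_neq0 => /eqP /ip_eq0 ->.
Qed.

Lemma ip_nabla_polarization (u : nat -> V) k m :
  2 * ipr (nabla u k) (u m) - (ipnorm2 ipr (u k) - ipnorm2 ipr (u k.-1)) =
  ipnorm2 ipr (u k.-1 - u m) - ipnorm2 ipr (u k - u m).
Proof. by rewrite /nabla !ipnorm2B ipBl; ring. Qed.

Lemma caputo_ip_defectE (a : nat -> R) (u : nat -> V) (n : nat) : (1 <= n)%N ->
  ipr (caputo a u n) (u n) - 2^-1 * caputo a (fun k => ipnorm2 ipr (u k) : R^o) n =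
  2^-1 * (a (n - 1)%N * ipnorm2 ipr (u 0%N - u n)
     + \sum_(1 <= k < n) (a (n - k.+1)%N - a (n - k)%N) * ipnorm2 ipr (u k - u n)).
Proof.
move=> n_ge1.
have -> : ipr (caputo a u n) (u n) =
    2^-1 * \sum_(1 <= k < n.+1) a (n - k)%N * (2 * ipr (nabla u k) (u n)).
  rewrite ip_suml mulr_sumr; apply: eq_bigr => k _.
  by rewrite ipZl mulrCA mulKf // pnatr_eq0.
rewrite -mulrBr /caputo -sumrB.
under eq_bigr do rewrite -mulrBr ip_nabla_polarization.
rewrite (sumr_by_parts (fun k => a (n - k)%N)) //.
by rewrite subrr ipnorm2_0 mulr0 subr0.
Qed.

Lemma caputo_ip_defect_single (a : nat -> R) (v : V) (n m : nat) :
  (1 <= m < n)%N ->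
  let u k := if k == m then v else 0 in
  ipr (caputo a u n) (u n) - 2^-1 * caputo a (fun k => ipnorm2 ipr (u k) : R^o) n =
  2^-1 * ((a (n - m.+1)%N - a (n - m)%N) * ipnorm2 ipr v).
Proof.
move=> /andP[m_ge1 m_lt_n] u; rewrite caputo_ip_defectE; last by lia.
have u_n : u n = 0 by rewrite /u gtn_eqF.
have u_off k : k != m -> ipnorm2 ipr (u k - u n) = 0.
  by move=> k_neq_m; rewrite u_n /u (negbTE k_neq_m) subr0 ipnorm2_0.
rewrite u_off ?mulr0 ?add0r; last by lia.
rewrite (bigD1_seq m) ?mem_index_iota ?m_ge1 ?iota_uniq //= big1 ?addr0.
  by rewrite u_n subr0 /u eqxx.
by move=> k k_neq_m; rewrite u_off ?mulr0.
Qed.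

End InnerProduct.

Theorem theorem3 (R : realType) (V : lmodType R) (ipr : inner_product V)
  (n : nat) (a : nat -> R) :
  (1 <= n)%N ->
  (forall j, (j < n)%N -> 0 < a j) ->
  (exists v : V, v != 0) ->
  ((forall u : nat -> V,
      2^-1 * (\sum_(1 <= k < n.+1) a (n - k)%N * (ipnorm2 ipr (u k) - ipnorm2 ipr (u k.-1)))
      <= ipr (\sum_(1 <= k < n.+1) a (n - k)%N *: nabla u k) (u n))
   <->
   (forall j, (j.+1 < n)%N -> a j.+1 <= a j)).
Proof.
move=> n_ge1 a_gt0 [v v_neq0]; split.
- move=> caputo_ineq j j_lt.
  have := caputo_ineq (fun k => if k == (n - j.+1)%N then v else 0).
  rewrite -subr_ge0 (caputo_ip_defect_single ipr a v); last by lia.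
  have -> : (n - (n - j.+1).+1)%N = j by lia.
  have -> : (n - (n - j.+1))%N = j.+1 by lia.
  by rewrite pmulr_rge0 ?invr_gt0 ?ltr0n // pmulr_lge0 ?ipnorm2_gt0 // subr_ge0.
- move=> a_mono u; rewrite -subr_ge0 (caputo_ip_defectE ipr a u n n_ge1).
  rewrite mulr_ge0 ?invr_ge0 ?ler0n // addr_ge0 ?mulr_ge0 ?ip_ge0 //.
    by rewrite ltW // a_gt0 //; lia.
  rewrite big_nat sumr_ge0 // => k /andP[k_ge1 k_lt_n].
  rewrite mulr_ge0 ?ip_ge0 // subr_ge0.
  have -> : (n - k)%N = (n - k.+1).+1 by lia.
  by apply: a_mono; lia.
Qed.
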